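(* For a real square matrix $A$, the following are equivalent: (i) $A$ is a WCDD Z-matrix with positive diagonal entries; (ii) $A$ is a WDD M-matrix.
   Context: For a complex $M\times M$ matrix $A=(a_{ij})$: row $i$ is strictly diagonally dominant (SDD) if $|a_{ii}|>\sum_{j\neq i}|a_{ij}|$, and weakly diagonally dominant (WDD) if $|a_{ii}|\geq\sum_{j\neq i}|a_{ij}|$; $A$ is SDD (resp. WDD) if all its rows are. The directed graph of $A$ has vertices $\{1,\dots,M\}$ and an edge $i\to j$ iff $a_{ij}\neq 0$; a path may be trivial (length zero). $A$ is WCDD if it is WDD and for each row $r$ there is a path in the graph of $A$ from $r$ to some SDD row. A real square matrix $A$ is monotone (in the sense of Collatz) if for every real vector $v$, $Av\geq 0$ (componentwise) implies $v\geq 0$. A Z-matrix is a real matrix with nonpositive off-diagonal entries. An M-matrix is a monotone Z-matrix. *)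

From HB Require Import structures.
From mathcomp Require Import all_boot all_order all_algebra.
Set Implicit Arguments. Unset Strict Implicit. Unset Printing Implicit Defensive.
Import Order.TTheory GRing.Theory Num.Theory.
Local Open Scope ring_scope.

Section Defs.
Variables (R : realFieldType) (n : nat).
Implicit Types (A : 'M[R]_n) (i : 'I_n).

Definition sdd_row A i : bool := \sum_(j < n | j != i) `|A i j| < `|A i i|.
Definition wdd_row A i : bool := \sum_(j < n | j != i) `|A i j| <= `|A i i|.

Definition WDD A : Prop := forall i, wdd_row A i.

Definition mx_edge A : rel 'I_n := fun i j => A i j != 0.

Definition WCDD A : Prop :=
  WDD A /\ forall r, exists2 j, connect (mx_edge A) r j & sdd_row A j.

Definition monotone A : Prop :=
  forall v : 'cV[R]_n, (forall i, 0 <= (A *m v) i 0) -> forall i, 0 <= v i 0.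

Definition Zmatrix A : Prop := forall i j, i != j -> A i j <= 0.

Definition Mmatrix A : Prop := Zmatrix A /\ monotone A.
End Defs.

(* A WCDD Z-matrix with positive diagonal is monotone by a discrete minimum
   principle: if A v >= 0 and v attains a negative minimum at some row, then
   that row has zero row sum and v takes the same minimum at every neighbour,
   so the minimum propagates along a path to an SDD row, whose positive row
   sum gives a contradiction.  Conversely, for a WDD M-matrix testing
   monotonicity against -e_i gives a positive diagonal, and testing it against
   minus the indicator of the vertices reachable from r shows that some
   reachable row must be SDD. *)
From HB Require Import structures.
From mathcomp Require Import all_boot all_order all_algebra.
From mathcomp Require Import lra.
Import Order.TTheory GRing.Theory Num.Theory.
Local Open Scope ring_scope.

Lemma connect_forward_closed {T : finType} {e : rel T} (P : pred T) {x y : T} :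
  (forall u w, P u -> e u w -> P w) -> connect e x y -> P x -> P y.
Proof.
move=> closedP /connectP [p exy ->] {y}.
by elim: p x exy => [|w p IHp] x //= /andP [exw pw] Px; apply/IHp/(closedP x).
Qed.

Section ZMatrix.
Variables (R : realFieldType) (n : nat) (A : 'M[R]_n).
Hypothesis ZA : Zmatrix A.
Implicit Types (i j : 'I_n) (v : 'cV[R]_n).

Lemma Zmatrix_row_sum i : 0 <= A i i ->
  \sum_j A i j = `|A i i| - \sum_(j | j != i) `|A i j|.
Proof.
move=> Aii_ge0; rewrite (bigD1 i) //= ger0_norm // -sumrN.
by congr (_ + _); apply: eq_bigr => j ji; rewrite ler0_norm ?opprK // ZA 1?eq_sym.
Qed.

Lemma wdd_rowE i : 0 <= A i i -> wdd_row A i = (0 <= \sum_j A i j).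
Proof. by move=> Aii_ge0; rewrite Zmatrix_row_sum // subr_ge0. Qed.

Lemma sdd_rowE i : 0 <= A i i -> sdd_row A i = (0 < \sum_j A i j).
Proof. by move=> Aii_ge0; rewrite Zmatrix_row_sum // subr_gt0. Qed.

Lemma mulmx_indicator (P : pred 'I_n) i :
  (A *m \col_j (P j)%:R) i 0 = \sum_(j | P j) A i j.
Proof.
rewrite mxE [RHS]big_mkcond /=; apply: eq_bigr => j _.
by rewrite mxE; case: (P j); rewrite ?mulr1 ?mulr0.
Qed.

Lemma Zmatrix_min_principle v i m :
  v i 0 = m -> (forall j, m <= v j 0) -> m < 0 -> 0 <= \sum_j A i j ->
  0 <= (A *m v) i 0 ->
  \sum_j A i j = 0 /\ forall j, A i j != 0 -> v j 0 = m.
Proof.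
move=> vi vmin m_lt0 rowsum_ge0 Av_ge0.
have shift_le0 j : A i j * (v j 0 - m) <= 0.
  have [->|ji] := eqVneq j i; first by rewrite vi subrr mulr0.
  by rewrite mulr_le0_ge0 ?subr_ge0 // ZA // eq_sym.
have Av_split : (A *m v) i 0 = (\sum_j A i j) * m + \sum_j A i j * (v j 0 - m).
  rewrite mxE mulr_suml -big_split; apply: eq_bigr => j _ /=.
  by rewrite mulrBr addrCA subrr addr0.
have rowsum_m_le0 : (\sum_j A i j) * m <= 0 by rewrite mulr_ge0_le0 // ltW.
have shifts_le0 : \sum_j A i j * (v j 0 - m) <= 0 by apply: sumr_le0.
split.
  have /eqP : (\sum_j A i j) * m = 0 by lra.
  by rewrite mulf_eq0 (negbTE (ltr0_neq0 m_lt0)) orbF => /eqP.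
have shifts_eq0 : \sum_j - (A i j * (v j 0 - m)) = 0 by rewrite sumrN; lra.
move=> j Aij_neq0; apply/eqP; rewrite -subr_eq0.
have shift_opp_ge0 l : true -> 0 <= - (A i l * (v l 0 - m)).
  by rewrite oppr_ge0 shift_le0.
have /eqP := psumr_eq0P shift_opp_ge0 shifts_eq0 (i := j) isT.
by rewrite oppr_eq0 mulf_eq0 (negbTE Aij_neq0).
Qed.

Lemma Zmatrix_wcdd_monotone : WCDD A -> (forall i, 0 < A i i) -> monotone A.
Proof.
move=> [wddA reach_sdd] diag_gt0 v Av_ge0 i.
rewrite leNgt; apply/negP => vi_lt0.
have [k _ vmin] := @arg_minP _ _ _ i predT (fun k => v k 0) isT.
set m := v k 0 in vmin.
have m_lt0 : m < 0 by apply: le_lt_trans (vmin i isT) vi_lt0.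
have min_row u : v u 0 = m -> \sum_j A u j = 0 /\ forall j, A u j != 0 -> v j 0 = m.
  move=> vu; apply: Zmatrix_min_principle => //; first by move=> j; apply: vmin.
  by rewrite -wdd_rowE ?ltW.
have [j kj sddj] := reach_sdd k.
have vj : v j 0 = m.
  apply/eqP; apply: (connect_forward_closed (fun u => v u 0 == m) _ kj).
    move=> u w /eqP vu Auw /=.
    by rewrite ((min_row u vu).2 w Auw).
  by rewrite /= eqxx.
by move: sddj; rewrite sdd_rowE ?ltW // (min_row j vj).1 ltxx.
Qed.

Lemma mulmxN_indicator (P : pred 'I_n) i :
  (A *m - \col_j (P j)%:R) i 0 = - \sum_(j | P j) A i j.
Proof. by rewrite mulmxN mxE mulmx_indicator. Qed.

Lemma monotone_Zmatrix_diag_gt0 : monotone A -> forall i, 0 < A i i.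
Proof.
move=> monoA i; rewrite ltNge; apply/negP => Aii_le0.
have Av_ge0 k : 0 <= (A *m - \col_j (j == i)%:R) k 0.
  rewrite mulmxN_indicator big_pred1_eq oppr_ge0.
  by have [->|ki] := eqVneq k i; [exact: Aii_le0 | exact: ZA].
by have := monoA _ Av_ge0 i; rewrite !mxE eqxx oppr_ge0 ler10.
Qed.

Lemma wdd_monotone_Zmatrix_wcdd : WDD A -> monotone A -> WCDD A.
Proof.
move=> wddA monoA; split=> // r.
have Aii_ge0 i : 0 <= A i i by rewrite ltW // monotone_Zmatrix_diag_gt0.
set S := connect (mx_edge A) r.
have [/existsP [j /andP [Sj sddj]] | no_sdd] := boolP [exists j, S j && sdd_row A j].
  by exists j.
have outside_S i j : S i -> ~~ S j -> A i j = 0.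
  move=> Si; apply: contraNeq => Aij_neq0.
  exact: connect_trans Si (connect1 Aij_neq0).
suff Av_ge0 i : 0 <= (A *m - \col_j (S j)%:R) i 0.
  by have := monoA _ Av_ge0 r; rewrite !mxE /S connect0 oppr_ge0 ler10.
rewrite mulmxN_indicator oppr_ge0.
case Si: (S i); last first.
  by apply: sumr_le0 => j Sj; apply: ZA; apply: contraTneq Sj => <-; rewrite Si.
have rowsum0 : \sum_j A i j = 0.
  apply/eqP; rewrite eq_le -wdd_rowE // wddA andbT leNgt -sdd_rowE //.
  by apply: contra no_sdd => sddi; apply/existsP; exists i; rewrite Si.
suff -> : \sum_(j | S j) A i j = \sum_j A i j by rewrite rowsum0.
rewrite [RHS](bigID S) /= [X in _ + X]big1 ?addr0 // => j /negP Sj.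
by rewrite outside_S ?Si //; apply/negP.
Qed.
End ZMatrix.

Theorem theorem3p5 (R : realFieldType) (n : nat) (A : 'M[R]_n) :
  (WCDD A /\ Zmatrix A /\ (forall i, 0 < A i i)) <-> (WDD A /\ Mmatrix A).
Proof.
split=> [[wcddA [ZA diag_gt0]] | [wddA [ZA monoA]]].
  by split; [case: wcddA | split; last exact: Zmatrix_wcdd_monotone].
split; first exact: wdd_monotone_Zmatrix_wcdd.
by split; last exact: monotone_Zmatrix_diag_gt0.
Qed.
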